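(* Let $\Bbbk$ be a field of characteristic zero, $n \geq 4$, $S=\Bbbk[x_1,\ldots,x_n]$. If $I\subset S$ is an artinian ideal minimally generated by $n+1$ quadratic monomials, then $S/I$ has the WLP.
   Context: A standard graded artinian algebra $A=\bigoplus_i A_i$ has the WLP if there is a linear form $\ell$ such that $\times\ell:A_k\to A_{k+1}$ has maximal rank (is injective or surjective) for every $k$; for monomial quotients $S/I$ this is equivalent to taking $\ell=x_1+\cdots+x_n$. *)

From mathcomp Require Import all_boot all_order all_algebra.
From mathcomp Require Import mpoly.
Set Implicit Arguments. Unset Strict Implicit. Unset Printing Implicit Defensive.
Import Order.TTheory GRing.Theory.
Local Open Scope ring_scope.

Definition in_ideal (F : fieldType) (n : nat) (J : finType)
  (p : J -> {mpoly F[n]}) (f : {mpoly F[n]}) : Prop :=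
  exists c : J -> {mpoly F[n]}, f = \sum_(j : J) c j * p j.

Definition minimal_gens (F : fieldType) (n : nat) (J : finType)
  (p : J -> {mpoly F[n]}) : Prop :=
  forall i : J,
    ~ (exists c : J -> {mpoly F[n]}, p i = \sum_(j : J | j != i) c j * p j).

(* A homogeneous ideal I (given as a membership predicate) has S/I artinian:
   the graded pieces (S/I)_d = S_d / I_d vanish for d large,
   i.e. every form of large degree lies in I. *)
Definition artinian (F : fieldType) (n : nat) (I : {mpoly F[n]} -> Prop) : Prop :=
  exists D : nat, forall d : nat, (D <= d)%N ->
    forall f : {mpoly F[n]}, f \is d.-homog -> I f.

(* x l : (S/I)_d -> (S/I)_{d+1} is injective, resp. surjective, unfolded on
   representatives (I homogeneous so (S/I)_d = S_d / (I ∩ S_d)). *)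
Definition mult_injective (F : fieldType) (n : nat) (I : {mpoly F[n]} -> Prop)
  (l : {mpoly F[n]}) (d : nat) : Prop :=
  forall f : {mpoly F[n]}, f \is d.-homog -> I (l * f) -> I f.

Definition mult_surjective (F : fieldType) (n : nat) (I : {mpoly F[n]} -> Prop)
  (l : {mpoly F[n]}) (d : nat) : Prop :=
  forall g : {mpoly F[n]}, g \is d.+1.-homog ->
    exists f : {mpoly F[n]}, f \is d.-homog /\ I (g - l * f).

Definition WLP (F : fieldType) (n : nat) (I : {mpoly F[n]} -> Prop) : Prop :=
  exists l : {mpoly F[n]}, l \is 1.-homog /\
    forall d : nat, mult_injective I l d \/ mult_surjective I l d.

(* Artinianity forces the n squares x_i^2 among the n + 1 generators, so
   I = (x_1^2, ..., x_n^2, x_a x_b) and S/I has as basis the squarefree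
   monomials x_U with U not containing both a and b ("allowed" sets).  On
   coefficient vectors, multiplication by l = x_1 + ... + x_n is the up
   operator c |-> (U |-> sum_(i in U) c (U \ i)).  Writing an allowed set as
   U, a + U or b + U with U a subset of V = [n] \ {a, b}, #|V| = m = n - 2,
   everything reduces to the up operator L of the Boolean lattice of V.
   L and the down operator D satisfy DL - LD = m - 2j on rank j, an sl2
   relation, so in characteristic 0 the power L^k is injective on rank j when
   2j + k <= m; as D is adjoint to L, L is onto rank j + 1 when m <= 2j + 1.
   If c has degree d and parts u, v, w on U, a + U, b + U, then l c = 0
   means L u = 0 and L v = L w = -u; when 2d <= m, L^2 v = 0 gives v = 0,
   then u = 0, then L w = 0 gives w = 0.  When 2d > m a preimage is built
   part by part, using that L is onto. *)

From mathcomp Require Import all_boot all_order all_algebra.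
From mathcomp Require Import mpoly.
From mathcomp Require Import ring zify.
Set Implicit Arguments. Unset Strict Implicit. Unset Printing Implicit Defensive.
Import Order.TTheory GRing.Theory.
Local Open Scope ring_scope.

Section Sl2.
Variables (F : fieldType) (T : lmodType F).
Hypothesis F0 : [pchar F] =i pred0.
Variables (X Y : T -> T) (hom : nat -> T -> Prop) (m : nat).
Hypothesis XD : forall c1 c2, X (c1 + c2) = X c1 + X c2.
Hypothesis XZ : forall a c, X (a *: c) = a *: X c.
Hypothesis Y0 : Y 0 = 0.
Hypothesis homX : forall j c, hom j c -> hom j.+1 (X c).
Hypothesis homY : forall j c, hom j.+1 c -> hom j (Y c).
Hypothesis homY0 : forall c, hom 0 c -> Y c = 0.
Hypothesis YX : forall j c, hom j c ->
  Y (X c) = X (Y c) + (m%:R - j%:R - j%:R) *: c.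

Lemma sl2_hom_iterX j k c : hom j c -> hom (j + k) (iter k X c).
Proof.
by move=> hc; elim: k => [|k IH]; rewrite ?addn0 ?addnS //=; apply: homX.
Qed.

Lemma sl2_iterX0 k : iter k X 0 = 0.
Proof. by elim: k => //= k ->; have := XZ 0 0; rewrite !scale0r. Qed.

Lemma sl2_Y_iterX j k c : hom j c ->
  Y (iter k.+1 X c) = iter k.+1 X (Y c)
     + ((k.+1)%:R * (m%:R - j%:R - j%:R - k%:R)) *: iter k X c.
Proof.
move=> hc; elim: k => [|k IH]; first by rewrite /= (YX hc) mul1r subr0.
rewrite [iter k.+2 X c]/= (YX (sl2_hom_iterX k.+1 hc)) IH XD XZ /=.
rewrite -addrA -scalerDl; congr (_ + _ *: _).
rewrite -[(k.+2)%N]addn2 -[(k.+1)%N]addn1 !natrD; ring.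
Qed.

Lemma sl2_coef_neq0 j k : (2 * j + k < m)%N ->
  ((k.+1)%:R * (m%:R - j%:R - j%:R - k%:R) : F) != 0.
Proof.
move=> lt_m; rewrite -!natrB; try lia.
by rewrite -natrM ((pcharf0P F).1 F0) muln_eq0 negb_or; apply/andP; split; lia.
Qed.

Lemma sl2_iterX_eq0 j k c : hom j c -> (2 * j + k < m)%N ->
  iter k.+1 X c = 0 -> Y c = 0 -> iter k X c = 0.
Proof.
move=> hc lt_m Xc0 Yc0; have := sl2_Y_iterX k hc.
rewrite Xc0 Yc0 Y0 sl2_iterX0 add0r => /esym/eqP.
by rewrite scaler_eq0 (negbTE (sl2_coef_neq0 lt_m)) => /eqP.
Qed.

Lemma sl2_iterX_Y j k c : hom j c -> iter k.+1 X c = 0 -> iter k.+2 X (Y c) = 0.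
Proof.
move=> hc Xc0; have := sl2_Y_iterX k hc; rewrite Xc0 Y0 => /eqP.
rewrite eq_sym addr_eq0 => /eqP XYc.
by rewrite iterS XYc -scaleNr XZ -iterS Xc0 scaler0.
Qed.

Lemma sl2_iterX_inj j k c : hom j c -> (2 * j + k <= m)%N -> iter k X c = 0 -> c = 0.
Proof.
elim: j k c => [|j IHj] k c hc; elim: k => [//|k IHk] le_m Xc0;
  apply: IHk; rewrite ?(sl2_iterX_eq0 hc _ Xc0) //; try lia.
- exact: homY0.
- by apply: (IHj k.+2) (sl2_iterX_Y hc Xc0); [apply: homY | lia].
Qed.

End Sl2.

Lemma span_of_orthogonal0 (F : fieldType) (I J : finType) (PI : pred I) (PJ : pred J)
    (M : I -> J -> F) :
  (forall w : J -> F, (forall i, i \in PI -> \sum_(j in PJ) M i j * w j = 0) ->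
     forall j, j \in PJ -> w j = 0) ->
  forall p : J -> F, exists c : I -> F,
    forall j, j \in PJ -> \sum_(i in PI) c i * M i j = p j.
Proof.
move=> orth0 p.
pose A : 'M[F]_(#|PI|, #|PJ|) := \matrix_(i, j) M (enum_val i) (enum_val j).
have free_AT : row_free A^T.
  rewrite -kermx_eq0; apply/rowV0P => v; rewrite sub_kermx => /eqP vA.
  pose w j := \sum_(k < #|PJ|) (enum_val k == j)%:R * v 0 k.
  have wE k : w (enum_val k) = v 0 k.
    rewrite /w (bigD1 k) //= eqxx mul1r big1 ?addr0 // => l /negbTE lk.
    by rewrite (inj_eq enum_val_inj) lk mul0r.
  apply/rowP => k; rewrite mxE -wE; apply: orth0 (enum_valP k) => i iP.
  rewrite big_enum_val; have := congr1 (fun B : 'rV_#|PI| => B 0 (enum_rank_in iP i)) vA.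
  rewrite !mxE => E; rewrite -[RHS]E; apply: eq_bigr => l _.
  by rewrite wE !mxE enum_rankK_in // mulrC.
have full_A : row_full A by rewrite /row_full -mxrank_tr.
pose pv : 'rV_#|PJ| := \row_k p (enum_val k).
have /submxP [D pvE] : (pv <= A)%MS by apply: submx_full.
exists (fun i => \sum_(k < #|PI|) (enum_val k == i)%:R * D 0 k) => j jP.
have := congr1 (fun B : 'rV_#|PJ| => B 0 (enum_rank_in jP j)) pvE.
rewrite !mxE enum_rankK_in // => ->; rewrite big_enum_val; apply: eq_bigr => k _.
rewrite (bigD1 k) //= eqxx mul1r big1 ?addr0; last first.
  by move=> l /negbTE lk; rewrite (inj_eq enum_val_inj) lk mul0r.
by rewrite !mxE enum_rankK_in.
Qed.

Lemma sumr_neq0_exists (V : nmodType) (I : finType) (A : pred I) (f : I -> V) :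
  \sum_(i in A) f i != 0 -> exists2 i, i \in A & f i != 0.
Proof.
case: (pickP [pred i in A | f i != 0]) => [i /andP [iA fi] _|h]; first by exists i.
by rewrite big1 ?eqxx // => i iA; move: (h i); rewrite /= iA /= => /negbFE /eqP.
Qed.

Lemma setD1U1 (K : finType) (T : {set K}) i k : i != k -> (i |: T) :\ k = i |: (T :\ k).
Proof. by move=> ik; apply/setP => x; rewrite !inE; case: (eqVneq x i) => // ->; rewrite ik. Qed.

Lemma setDD1 (K : finType) (V T : {set K}) k :
  k \in V -> V :\: (T :\ k) = k |: (V :\: T).
Proof.
by move=> kV; rewrite setDDr setUC; congr (_ :|: _); apply/setP => x; rewrite !inE andbC;
  case: eqVneq => // ->.
Qed.

Section BooleanLattice.
Variables (F : fieldType) (K : finType) (V : {set K}).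
Local Notation fn := {ffun {set K} -> F^o}.
Local Notation m := #|V|.
Implicit Types (j k : nat) (c : fn).

Definition raise (c : fn) : fn :=
  [ffun U : {set K} => if U \subset V then \sum_(i in U) c (U :\ i) else 0].

Definition lower (c : fn) : fn :=
  [ffun T : {set K} => if T \subset V then \sum_(i in V :\: T) c (i |: T) else 0].

Definition supp_rank j (c : fn) :=
  forall T, c T != 0 -> (T \subset V) && (#|T| == j).

Definition supp_corank j (c : fn) :=
  forall T, c T != 0 -> (T \subset V) && (#|V :\: T| == j).

Lemma raiseD (c1 c2 : fn) : raise (c1 + c2) = raise c1 + raise c2.
Proof.
apply/ffunP=> U; rewrite !ffunE; case: ifP => _; last by rewrite addr0.
by rewrite -big_split; apply: eq_bigr => i _; rewrite ffunE.
Qed.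

Lemma raiseZ (a : F) (c : fn) : raise (a *: c) = a *: raise c.
Proof.
apply/ffunP=> U; rewrite !ffunE; case: ifP => _; last by rewrite scaler0.
by rewrite scaler_sumr; apply: eq_bigr => i _; rewrite ffunE.
Qed.

Lemma lowerD (c1 c2 : fn) : lower (c1 + c2) = lower c1 + lower c2.
Proof.
apply/ffunP=> T; rewrite !ffunE; case: ifP => _; last by rewrite addr0.
by rewrite -big_split; apply: eq_bigr => i _; rewrite ffunE.
Qed.

Lemma lowerZ (a : F) (c : fn) : lower (a *: c) = a *: lower c.
Proof.
apply/ffunP=> T; rewrite !ffunE; case: ifP => _; last by rewrite scaler0.
by rewrite scaler_sumr; apply: eq_bigr => i _; rewrite ffunE.
Qed.

Lemma raise0 : raise 0 = 0.
Proof. by have := raiseZ 0 0; rewrite !scale0r. Qed.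

Lemma lower0 : lower 0 = 0.
Proof. by have := lowerZ 0 0; rewrite !scale0r. Qed.

Lemma raiseN (c : fn) : raise (- c) = - raise c.
Proof. by rewrite -scaleN1r raiseZ scaleN1r. Qed.

Lemma supp_rank_out j c (T : {set K}) :
  supp_rank j c -> ~~ ((T \subset V) && (#|T| == j)) -> c T = 0.
Proof. by move=> h; apply: contraNeq; apply: h. Qed.

Lemma supp_corank_out j c (T : {set K}) :
  supp_corank j c -> ~~ ((T \subset V) && (#|V :\: T| == j)) -> c T = 0.
Proof. by move=> h; apply: contraNeq; apply: h. Qed.

Lemma supp_rankB j c1 c2 : supp_rank j c1 -> supp_rank j c2 -> supp_rank j (c1 - c2).
Proof.
move=> h1 h2 T; rewrite !ffunE; have [c1T|/h1 //] := eqVneq (c1 T) 0.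
by rewrite c1T sub0r oppr_eq0; apply: h2.
Qed.

Lemma supp_rank_raise j c : supp_rank j c -> supp_rank j.+1 (raise c).
Proof.
move=> h U; rewrite ffunE; case: ifP => UV; last by rewrite eqxx.
case/sumr_neq0_exists => i iU /h /andP [_ /eqP cU].
by rewrite /= (cardsD1 i U) iU cU.
Qed.

Lemma supp_rank_lower j c : supp_rank j.+1 c -> supp_rank j (lower c).
Proof.
move=> h T; rewrite ffunE; case: ifP => TV; last by rewrite eqxx.
case/sumr_neq0_exists => i; rewrite inE => /andP [iT _] /h /andP [_].
by rewrite /= cardsU1 iT.
Qed.

Lemma supp_rank0_lower c : supp_rank 0 c -> lower c = 0.
Proof.
move=> h; apply/ffunP => T; rewrite !ffunE; case: ifP => // _.
apply: big1 => i _; apply: supp_rank_out h _.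
by rewrite cards_eq0 andbC; apply/nandP; left; apply/set0Pn; exists i; apply: setU11.
Qed.

Lemma supp_corank_lower j c : supp_corank j c -> supp_corank j.+1 (lower c).
Proof.
move=> h T; rewrite ffunE; case: ifP => TV; last by rewrite eqxx.
case/sumr_neq0_exists => i iVT /h /andP [_ /eqP cT].
by rewrite /= (cardsD1 i (V :\: T)) iVT setDDl setUC cT.
Qed.

Lemma supp_corank_raise j c : supp_corank j.+1 c -> supp_corank j (raise c).
Proof.
move=> h U; rewrite ffunE; case: ifP => UV; last by rewrite eqxx.
case/sumr_neq0_exists => i iU /h /andP [_].
by rewrite /= setDD1 ?(subsetP UV) // cardsU1 !inE iU.
Qed.

Lemma supp_corank0_raise c : supp_corank 0 c -> raise c = 0.
Proof.
move=> h; apply/ffunP => U; rewrite !ffunE; case: ifP => // UV.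
apply: big1 => i iU; apply: supp_corank_out h _.
rewrite setDD1 ?(subsetP UV) // cards_eq0 andbC; apply/nandP; left.
by apply/set0Pn; exists i; apply: setU11.
Qed.

Lemma lower_raise_comm (c : fn) (T : {set K}) : T \subset V ->
  lower (raise c) T - raise (lower c) T = ((#|V :\: T|)%:R - (#|T|)%:R) * c T.
Proof.
move=> TV; rewrite !ffunE TV.
have -> : \sum_(i in V :\: T) raise c (i |: T)
    = \sum_(i in V :\: T) (c T + \sum_(k in T) c (i |: (T :\ k))).
  apply: eq_big => // i; rewrite inE => /andP [iT iV].
  rewrite ffunE subUset sub1set iV TV /= big_setU1 //= setU1K //; congr (_ + _).
  by apply: eq_bigr => k kT; rewrite setD1U1 //; apply: contraNneq iT => ->.
have -> : \sum_(k in T) lower c (T :\ k)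
    = \sum_(k in T) (c T + \sum_(i in V :\: T) c (i |: (T :\ k))).
  apply: eq_bigr => k kT; rewrite ffunE (subset_trans (subsetDl T _) TV).
  by rewrite setDD1 ?(subsetP TV) // big_setU1 ?setD1K // !inE kT.
rewrite !big_split /= !sumr_const [X in _ + X - _]exchange_big /=.
by rewrite mulrBl !mulr_natl opprD addrACA subrr addr0.
Qed.

Lemma lower_raise_rank j c : supp_rank j c ->
  lower (raise c) = raise (lower c) + (m%:R - j%:R - j%:R) *: c.
Proof.
move=> h; apply/ffunP => T; rewrite !ffunE.
case: (boolP (T \subset V)) => TV; last first.
  by rewrite (supp_rank_out h) ?(negbTE TV) // scaler0 addr0.
have := lower_raise_comm c TV; rewrite !ffunE TV => /eqP; rewrite subr_eq => /eqP ->.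
case: (eqVneq (c T) 0) => [->|/h /andP [_ /eqP cT]]; first by rewrite mulr0 scaler0 add0r addr0.
by rewrite addrC cardsDS // natrB ?subset_leq_card // cT.
Qed.

Lemma raise_lower_corank j c : supp_corank j c ->
  raise (lower c) = lower (raise c) + (m%:R - j%:R - j%:R) *: c.
Proof.
move=> h; apply/ffunP => T; rewrite !ffunE.
case: (boolP (T \subset V)) => TV; last first.
  by rewrite (supp_corank_out h) ?(negbTE TV) // scaler0 addr0.
have := lower_raise_comm c TV; rewrite !ffunE TV => /eqP.
rewrite subr_eq addrC -subr_eq => /eqP <-.
case: (eqVneq (c T) 0) => [->|/h /andP [_ /eqP cT]]; first by rewrite mulr0 scaler0 subr0 addr0.
have le_Tm : (#|T| <= m)%N by rewrite subset_leq_card.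
rewrite cT; move: cT; rewrite cardsDS // => cT.
have -> : #|T| = (m - j)%N by lia.
rewrite natrB; last by lia.
rewrite /GRing.scale /=; ring.
Qed.

Hypothesis F0 : [pchar F] =i pred0.

Lemma iter_raise_inj j k c : supp_rank j c -> (2 * j + k <= m)%N -> iter k raise c = 0 -> c = 0.
Proof.
exact: (sl2_iterX_inj F0 raiseD raiseZ lower0 supp_rank_raise supp_rank_lower
          supp_rank0_lower lower_raise_rank).
Qed.

Lemma iter_lower_inj j k c : supp_corank j c -> (2 * j + k <= m)%N -> iter k lower c = 0 -> c = 0.
Proof.
exact: (sl2_iterX_inj F0 lowerD lowerZ raise0 supp_corank_lower supp_corank_raise
          supp_corank0_raise raise_lower_corank).
Qed.

Definition toggle (i : K) (T : {set K}) := if i \in T then T :\ i else i |: T.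

Lemma toggleK i : involutive (toggle i).
Proof.
move=> T; rewrite /toggle; case: (boolP (i \in T)) => iT.
  by rewrite setD11 setD1K.
by rewrite setU11 setU1K.
Qed.

Lemma raise_lower_adjoint (u w : fn) : \sum_S raise u S * w S = \sum_T u T * lower w T.
Proof.
have -> : \sum_S raise u S * w S = \sum_(S : {set K}) \sum_(i : K)
    (if (S \subset V) && (i \in S) then u (S :\ i) * w S else 0).
  apply: eq_bigr => S _; rewrite ffunE; case: ifP => SV /=.
    by rewrite mulr_suml big_mkcond.
  by rewrite mul0r big1.
have -> : \sum_T u T * lower w T = \sum_(T : {set K}) \sum_(i : K)
    (if (T \subset V) && (i \in V :\: T) then u T * w (i |: T) else 0).
  apply: eq_bigr => T _; rewrite ffunE; case: ifP => TV /=.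
    by rewrite mulr_sumr big_mkcond.
  by rewrite mulr0 big1.
rewrite exchange_big [RHS]exchange_big; apply: eq_bigr => i _.
rewrite (reindex_inj (can_inj (toggleK i))); apply: eq_bigr => T _.
rewrite /toggle; case: (boolP (i \in T)) => iT.
  by rewrite setD11 !inE iT /= !andbF.
rewrite subUset sub1set setU11 setU1K ?iT // !inE iT /=.
by case: (i \in V); case: (T \subset V).
Qed.

Lemma ffunZE (a : F) c (T : {set K}) : (a *: c) T = a * c T.
Proof. by rewrite ffunE. Qed.

Definition delta (T : {set K}) : fn := [ffun S => (S == T)%:R].

Lemma lower_eq0_rank j (w : fn) : (0 < m)%N -> (m <= 2 * j + 1)%N ->
  supp_rank j.+1 w -> lower w = 0 -> w = 0.
Proof.
move=> m_gt0 le_m hw lw0; have corank_w : supp_corank (m - j.+1) w.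
  by move=> S /hw /andP [SV /eqP cS]; rewrite SV /= cardsDS // cS.
have [le_jm | lt_mj] := leqP j.+1 m; first by apply: (iter_lower_inj (k := 1) corank_w) => //; lia.
apply/ffunP => S; rewrite ffunE; apply: supp_rank_out hw _; apply/nandP.
case: (boolP (S \subset V)) => [SV|]; [right | by left].
by apply: contraTneq (subset_leq_card SV) => ->; rewrite -ltnNge.
Qed.

Definition rank_pred j := [pred T : {set K} | (T \subset V) && (#|T| == j)].

Lemma orthogonal_raise_delta j : (0 < m)%N -> (m <= 2 * j + 1)%N ->
  forall w : {set K} -> F,
    (forall T, T \in rank_pred j -> \sum_(U in rank_pred j.+1) raise (delta T) U * w U = 0) ->
  forall U, U \in rank_pred j.+1 -> w U = 0.
Proof.
move=> m_gt0 le_m w hw U hU; pose W : fn := [ffun U => if U \in rank_pred j.+1 then w U else 0].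
have rank_W : supp_rank j.+1 W.
  by move=> S; rewrite ffunE; case: ifP => [+ _|_]; rewrite ?eqxx.
suff /ffunP /(_ U) : W = 0 by rewrite !ffunE hU.
apply: (lower_eq0_rank _ _ rank_W) => //; apply/ffunP => T; rewrite [RHS]ffunE.
have [hT|hT] := boolP (T \in rank_pred j); last first.
  exact: (supp_rank_out (supp_rank_lower rank_W)).
rewrite -(hw T hT) big_mkcond /=.
have -> : \sum_U (if U \in rank_pred j.+1 then raise (delta T) U * w U else 0)
    = \sum_U raise (delta T) U * W U.
  by apply: eq_bigr => S _; rewrite [W S]ffunE; case: ifP; rewrite ?mulr0.
rewrite raise_lower_adjoint (bigD1 T) //= [delta T T]ffunE eqxx mul1r big1 ?addr0 //.
by move=> S /negbTE ST; rewrite [delta T S]ffunE ST mul0r.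
Qed.

Lemma raise_surj j (p : fn) : (0 < m)%N -> (m <= 2 * j + 1)%N -> supp_rank j.+1 p ->
  exists2 u, supp_rank j u & raise u = p.
Proof.
move=> m_gt0 le_m hp.
have [c hc] := span_of_orthogonal0 (orthogonal_raise_delta m_gt0 le_m) (fun U => p U).
pose u : fn := [ffun T => if T \in rank_pred j then c T else 0].
have hu : supp_rank j u by move=> S; rewrite ffunE; case: ifP => [+ _|_]; rewrite ?eqxx.
exists u => //; apply/ffunP => U; have [hU|hU] := boolP (U \in rank_pred j.+1); last first.
  by rewrite (supp_rank_out (supp_rank_raise hu) hU) (supp_rank_out hp hU).
have -> : u = \sum_(T in rank_pred j) c T *: delta T.
  apply/ffunP => S; rewrite sum_ffunE [u S]ffunE; case: ifP => hS.
    rewrite (bigD1 S) //= ffunZE [delta S S]ffunE eqxx mulr1 big1 ?addr0 //.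
    by move=> T /andP [_ /negbTE TS]; rewrite ffunZE [delta T S]ffunE eq_sym TS mulr0.
  rewrite big1 // => T hT; rewrite ffunZE [delta T S]ffunE.
  by case: eqP => [ST|]; [rewrite ST hT in hS | rewrite mulr0].
rewrite -hc // (big_morph raise raiseD raise0) sum_ffunE; apply: eq_bigr => T _.
by rewrite raiseZ ffunZE.
Qed.

End BooleanLattice.

Section AllowedSets.
Variables (F : fieldType) (K : finType) (a b : K).
Hypothesis F0 : [pchar F] =i pred0.
Hypothesis ab : a != b.
Local Notation fn := {ffun {set K} -> F^o}.
Local Notation V := (~: [set a; b]).
Local Notation m := #|V|.
Implicit Types (d : nat) (c p : fn) (T U : {set K}).

Definition allowed T := ~~ ((a \in T) && (b \in T)).

Definition supp_allowed d c := forall T, c T != 0 -> allowed T && (#|T| == d).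

Definition restrict c : fn := [ffun T : {set K} => if T \subset V then c T else 0].

Definition shift x c : fn := [ffun T : {set K} => if T \subset V then c (x |: T) else 0].

Lemma subsetC2 T : (T \subset V) = (a \notin T) && (b \notin T).
Proof.
apply/subsetP/andP => [TV | [aT bT] x xT]; last first.
  by rewrite !inE; apply/norP; split; [apply: contraNneq aT | apply: contraNneq bT] => <-.
by split; apply/negP => /TV; rewrite !inE eqxx ?orbT.
Qed.

Lemma notin_subsetC2 x T : x \in [set a; b] -> T \subset V -> x \notin T.
Proof. by move=> xab /subsetP TV; apply/negP => /TV; rewrite inE xab. Qed.

Lemma allowed_subsetC2 T : T \subset V -> allowed T.
Proof. by rewrite subsetC2 /allowed => /andP [/negbTE -> _]. Qed.

Lemma allowed_setU1 x T : T \subset V -> allowed (x |: T).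
Proof.
rewrite subsetC2 /allowed !inE => /andP [/negbTE -> /negbTE ->]; rewrite !orbF.
by apply: contraNN ab => /andP [/eqP -> /eqP ->].
Qed.

Lemma allowedP T : allowed T ->
  [\/ T \subset V, exists2 U : {set K}, U \subset V & T = a |: U
   | exists2 U : {set K}, U \subset V & T = b |: U].
Proof.
rewrite /allowed; case: (boolP (a \in T)) => aT /= => [bT|].
  by constructor 2; exists (T :\ a); rewrite ?setD1K // subsetC2 !inE eqxx /= (negbTE bT) andbF.
case: (boolP (b \in T)) => bT _; last by constructor 1; rewrite subsetC2 aT.
by constructor 3; exists (T :\ b); rewrite ?setD1K // subsetC2 !inE eqxx /= (negbTE aT) andbF.
Qed.

Lemma raise_setTE c U : raise setT c U = \sum_(i in U) c (U :\ i).
Proof. by rewrite ffunE subsetT. Qed.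

Lemma raise_restrict c U : U \subset V -> raise V (restrict c) U = raise setT c U.
Proof.
move=> UV; rewrite raise_setTE ffunE UV; apply: eq_bigr => i _.
by rewrite ffunE (subset_trans (subsetDl U _) UV).
Qed.

Lemma raise_setT_setU1 x c U : x \in [set a; b] -> U \subset V ->
  raise setT c (x |: U) = restrict c U + raise V (shift x c) U.
Proof.
move=> xab UV; rewrite raise_setTE big_setU1 ?notin_subsetC2 //= setU1K ?notin_subsetC2 //.
rewrite !ffunE UV; congr (_ + _); apply: eq_bigr => i iU.
rewrite ffunE (subset_trans (subsetDl U _) UV) setD1U1 //.
by apply: contraTneq iU => <-; rewrite notin_subsetC2.
Qed.

Lemma supp_rank_restrict d c : supp_allowed d c -> supp_rank V d (restrict c).
Proof. by move=> h T; rewrite ffunE; case: ifP => [TV /h /andP [_ ->]|_]; rewrite ?eqxx. Qed.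

Lemma supp_rank_shift x d c : x \in [set a; b] -> supp_allowed d c -> supp_rank V d.-1 (shift x c).
Proof.
move=> xab h T; rewrite ffunE; case: ifP => [TV /h /andP [_ /eqP]|_]; last by rewrite eqxx.
by rewrite cardsU1 notin_subsetC2 //= => <-.
Qed.

Lemma supp_allowed_eq0 d c : supp_allowed d c ->
  restrict c = 0 -> shift a c = 0 -> shift b c = 0 -> c = 0.
Proof.
move=> hc c0 ca0 cb0; apply/ffunP => T; rewrite ffunE.
have [//|/hc /andP [/allowedP allowed_T _]] := eqVneq (c T) 0.
case: allowed_T => [TV|[U UV eT]|[U UV eT]].
- by move/ffunP/(_ T): c0; rewrite !ffunE TV.
- by move/ffunP/(_ U): ca0; rewrite !ffunE UV -eT.
- by move/ffunP/(_ U): cb0; rewrite !ffunE UV -eT.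
Qed.

Lemma raise_allowed_inj d c : (2 * d <= m)%N -> (2 <= m)%N -> supp_allowed d c ->
  (forall U, allowed U -> raise setT c U = 0) -> c = 0.
Proof.
move=> le_dm m_ge2 hc raise_c0.
have a2 : a \in [set a; b] by rewrite !inE eqxx.
have b2 : b \in [set a; b] by rewrite !inE eqxx orbT.
have raise_u : raise V (restrict c) = 0.
  apply/ffunP => U; rewrite [RHS]ffunE; have [UV|/negbTE nUV] := boolP (U \subset V).
    by rewrite raise_restrict // raise_c0 // allowed_subsetC2.
  by rewrite ffunE nUV.
have raise_shift x : x \in [set a; b] -> raise V (shift x c) = - restrict c.
  move=> xab; apply/ffunP => U; have [UV|/negbTE nUV] := boolP (U \subset V).
    rewrite [RHS]ffunE; apply/eqP; rewrite -addr_eq0 addrC -raise_setT_setU1 //.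
    by rewrite raise_c0 // allowed_setU1.
  by rewrite !ffunE nUV oppr0.
have v0 : shift a c = 0.
  apply: (iter_raise_inj F0 (k := 2) (supp_rank_shift a2 hc)); first lia.
  by rewrite /= raise_shift // raiseN raise_u oppr0.
have u0 : restrict c = 0.
  by rewrite -[restrict c]opprK -(raise_shift a a2) v0 raise0 oppr0.
have w0 : shift b c = 0.
  apply: (iter_raise_inj F0 (k := 1) (supp_rank_shift b2 hc)); first lia.
  by rewrite /= raise_shift // u0 oppr0.
exact: supp_allowed_eq0 hc u0 v0 w0.
Qed.

Lemma raise_allowed_surj d p : (m < 2 * d)%N -> (0 < m)%N -> supp_allowed d.+1 p ->
  exists2 c, supp_allowed d c & forall U, allowed U -> raise setT c U = p U.
Proof.
move=> lt_m m_gt0 hp.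
have a2 : a \in [set a; b] by rewrite !inE eqxx.
have b2 : b \in [set a; b] by rewrite !inE eqxx orbT.
have [u hu raise_u] := raise_surj F0 m_gt0 (j := d) ltac:(lia) (supp_rank_restrict hp).
case: d lt_m hp hu raise_u => [|d] lt_m hp hu raise_u; first by lia.
have [v hv raise_v] := raise_surj F0 m_gt0 (j := d) ltac:(lia)
  (supp_rankB (supp_rank_shift a2 hp) hu).
have [w hw raise_w] := raise_surj F0 m_gt0 (j := d) ltac:(lia)
  (supp_rankB (supp_rank_shift b2 hp) hu).
pose c : fn := [ffun T : {set K} => if a \in T then (if b \in T then 0 else v (T :\ a))
                         else if b \in T then w (T :\ b) else u T].
have restrict_c : restrict c = u.
  apply/ffunP => T; rewrite !ffunE; case: ifP => TV; last first.
    by rewrite (supp_rank_out hu) // TV.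
  by move: TV; rewrite subsetC2 => /andP [/negbTE -> /negbTE ->].
have shift_a : shift a c = v.
  apply/ffunP => T; rewrite !ffunE; case: ifP => TV; last by rewrite (supp_rank_out hv) // TV.
  rewrite setU11 in_setU1 eq_sym (negbTE ab) (negbTE (notin_subsetC2 b2 TV)) /=.
  by rewrite setU1K // notin_subsetC2.
have shift_b : shift b c = w.
  apply/ffunP => T; rewrite !ffunE; case: ifP => TV; last by rewrite (supp_rank_out hw) // TV.
  rewrite setU11 in_setU1 (negbTE ab) (negbTE (notin_subsetC2 a2 TV)) /=.
  by rewrite setU1K // notin_subsetC2.
exists c.
  move=> T; rewrite ffunE /allowed.
  case: (boolP (a \in T)) => aT; case: (boolP (b \in T)) => bT /=; rewrite ?eqxx //.
  - by move/hv => /andP [_ /eqP cT]; rewrite (cardsD1 a T) aT cT.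
  - by move/hw => /andP [_ /eqP cT]; rewrite (cardsD1 b T) bT cT.
  - by move/hu => /andP [_ ->].
move=> U /allowedP [UV|[U' UV ->]|[U' UV ->]].
- by rewrite -raise_restrict // restrict_c raise_u ffunE UV.
- by rewrite raise_setT_setU1 // shift_a raise_v restrict_c !ffunE UV addrC subrK.
- by rewrite raise_setT_setU1 // shift_b raise_w restrict_c !ffunE UV addrC subrK.
Qed.

End AllowedSets.

Section MonomialIdeal.
Variables (F : fieldType) (n : nat) (J : finType) (g : J -> 'X_{1..n}).
Local Notation P := {mpoly F[n]}.
Local Notation I := (in_ideal (fun j => 'X_[g j] : P)).

Lemma mcoeffMX_if (p : P) (m k : 'X_{1..n}) :
  (p * 'X_[m])@_k = if (m <= k)%MM then p@_(k - m)%MM else 0.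
Proof.
case: ifP => [le_mk|nle_mk]; first by rewrite -{1}(submK le_mk) addmC mcoeffMX.
apply: memN_msupp_eq0; apply/negP; rewrite (perm_mem (msuppMX p m)).
by case/mapP => m' _ km; rewrite km lem_addr in nle_mk.
Qed.

Lemma in_ideal0 : I 0.
Proof. by exists (fun _ => 0); rewrite big1 // => j _; rewrite mul0r. Qed.

Lemma in_idealD f1 f2 : I f1 -> I f2 -> I (f1 + f2).
Proof.
move=> [c1 ->] [c2 ->]; exists (fun j => c1 j + c2 j).
by rewrite -big_split; apply: eq_bigr => j _; rewrite mulrDl.
Qed.

Lemma in_idealMl h f : I f -> I (h * f).
Proof.
move=> [c ->]; exists (fun j => h * c j).
by rewrite mulr_sumr; apply: eq_bigr => j _; rewrite mulrA.
Qed.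

Lemma in_idealX j m : (g j <= m)%MM -> I 'X_[m].
Proof.
move=> le_gm; exists (fun k => if k == j then 'X_[m - g j] else 0).
rewrite (bigD1 j) //= eqxx big1 ?addr0; first by rewrite -mpolyXD submK.
by move=> k /negbTE ->; rewrite mul0r.
Qed.

Definition standard (m : 'X_{1..n}) := [forall j, ~~ (g j <= m)%MM].

Lemma in_monomial_idealP f : I f <-> (forall m, standard m -> f@_m = 0).
Proof.
split=> [[c ->] m /forallP std_m | h].
  by rewrite raddf_sum; apply: big1 => j _ /=; rewrite mcoeffMX_if (negbTE (std_m j)).
rewrite (mpolyE f) big_seq; apply: (big_ind I in_ideal0 in_idealD) => m _.
have [/h -> | /forallPn [j /negPn le_gm]] := boolP (standard m).
  by rewrite scale0r; apply: in_ideal0.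
by rewrite -mul_mpolyC; apply: in_idealMl; apply: in_idealX le_gm.
Qed.

End MonomialIdeal.

Section SquarefreeMonomials.
Variables (F : fieldType) (n : nat).
Local Notation P := {mpoly F[n]}.
Implicit Types (U : {set 'I_n}) (i : 'I_n).

Definition mset (U : {set 'I_n}) : 'X_{1..n} := [multinom ((i \in U) : nat) | i < n].

Lemma msetE U i : mset U i = (i \in U).
Proof. exact: mnmE. Qed.

Lemma mdeg_mset U : mdeg (mset U) = #|U|.
Proof.
rewrite mdegE -sum1_card [RHS]big_mkcond /=; apply: eq_bigr => i _.
by rewrite msetE; case: (i \in U).
Qed.

Lemma mset_inj : injective mset.
Proof.
move=> U V /mnmP eUV; apply/setP => i; have := eUV i; rewrite !msetE.
by case: (i \in U); case: (i \in V).
Qed.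

Lemma lep1_mset U i : (U_(i) <= mset U)%MM = (i \in U).
Proof. by rewrite lep1mP msetE; case: (i \in U). Qed.

Lemma mset_subm1 U i : i \in U -> (mset U - U_(i))%MM = mset (U :\ i).
Proof.
move=> iU; apply/mnmP => k; rewrite mnmBE !msetE mnm1E !inE.
by case: (eqVneq i k) => [<-|_]; rewrite ?iU ?subn0.
Qed.

Definition ell : P := \sum_(i < n) 'X_i.

Lemma ell_homog : ell \is 1.-homog.
Proof. by apply: rpred_sum => i _; rewrite dhomogX /= mdeg1. Qed.

Lemma mcoeff_ellM (f : P) U : (ell * f)@_(mset U) = \sum_(i in U) f@_(mset (U :\ i)).
Proof.
rewrite /ell mulr_suml raddf_sum [RHS]big_mkcond /=; apply: eq_bigr => i _.
by rewrite mulrC mcoeffMX_if lep1_mset; case: ifP => // iU; rewrite mset_subm1.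
Qed.

End SquarefreeMonomials.

Section QuadraticMonomials.
Variable n : nat.
Implicit Types (m : 'X_{1..n}) (i j : 'I_n).

Lemma lep_mulm1 i k m : (U_(i) *+ k <= m)%MM = (k <= m i)%N.
Proof.
apply/mnm_lepP/idP => [/(_ i)|le_km l]; first by rewrite mulmnE mnm1E eqxx mul1n.
by rewrite mulmnE mnm1E; case: eqVneq => [<-|_]; rewrite ?mul1n ?mul0n.
Qed.

Lemma lep_addm1 i j m : i != j -> (U_(i) + U_(j) <= m)%MM = (m i != 0%N) && (m j != 0%N).
Proof.
move=> ij; apply/idP/andP => [le_m | [mi mj]].
  by rewrite -!lep1mP; split; [exact: lepm_trans (lem_addr _ _) le_m |
                               exact: lepm_trans (lem_addl _ _) le_m].
apply/mnm_lepP => k; rewrite mnmDE !mnm1E.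
case: (eqVneq i k) => [<-|_]; first by rewrite eq_sym (negbTE ij) addn0 lt0n.
by case: eqVneq => [<-|]; rewrite ?lt0n.
Qed.

Lemma mdeg2P m : mdeg m = 2%N -> exists i j, m = (U_(i) + U_(j))%MM.
Proof.
move=> dm; have [i mi] : exists i, m i != 0%N.
  case: (pickP (fun i => m i != 0%N)) => [i mi|m0]; first by exists i.
  by move: dm; rewrite mdegE big1 // => i _; move/negbFE/eqP: (m0 i).
have /mdeg1P [j /eqP mj] : mdeg (m - U_(i))%MM == 1%N.
  by rewrite -(eqn_add2r (mdeg U_(i))) -mdegD submK ?lep1mP // dm mdeg1.
by exists i, j; rewrite -mj addmC submK // lep1mP.
Qed.

Lemma lep_mulm1_mdeg2 i e m : (m <= U_(i) *+ e)%MM -> mdeg m = 2%N -> m = (U_(i) *+ 2)%MM.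
Proof.
move=> /mnm_lepP le_m dm; have m0 k : k != i -> m k = 0%N.
  by move=> ki; have := le_m k; rewrite mulmnE mnm1E eq_sym (negbTE ki) mul0n leqn0 => /eqP.
have mi : m i = 2%N by move: dm; rewrite mdegE (bigD1 i) //= big1 ?addn0 // => k; apply: m0.
apply/mnmP => k; rewrite mulmnE mnm1E; case: eqVneq => [<-|ik]; first by rewrite mi.
by rewrite m0 // eq_sym.
Qed.

Lemma lep_mulm1_mset i (U : {set 'I_n}) : (U_(i) *+ 2 <= mset U)%MM = false.
Proof. by rewrite lep_mulm1 msetE; case: (i \in U). Qed.

Lemma lep_addm1_mset i j (U : {set 'I_n}) : i != j ->
  (U_(i) + U_(j) <= mset U)%MM = (i \in U) && (j \in U).
Proof. by move=> ij; rewrite lep_addm1 // !msetE; case: (i \in U); case: (j \in U). Qed.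

Lemma mset_support m : (forall i, ~~ (U_(i) *+ 2 <= m)%MM) -> m = mset [set i | m i != 0%N].
Proof.
move=> sqfree; apply/mnmP => i; rewrite msetE inE.
by have := sqfree i; rewrite lep_mulm1; case: (m i) => [|[|]].
Qed.

End QuadraticMonomials.

Section QuadraticGenerators.
Variables (F : fieldType) (n : nat) (g : 'I_n.+1 -> 'X_{1..n}).
Local Notation G := (fun j => 'X_[g j] : {mpoly F[n]}).
Hypothesis hdeg : forall j, mdeg (g j) = 2%N.

Lemma minimal_gens_inj : minimal_gens G -> injective g.
Proof.
move=> hmin j k gjk; apply/eqP/negPn/negP => jk; apply: (hmin j).
exists (fun i => if i == k then 1 else 0); rewrite (bigD1 k) 1?eq_sym //= eqxx mul1r gjk.
by rewrite big1 ?addr0 // => i /andP [_ /negbTE ->]; rewrite mul0r.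
Qed.

Lemma artinian_square : artinian (in_ideal G) -> forall i, exists j, g j = (U_(i) *+ 2)%MM.
Proof.
move=> [D hD] i; have homX : ('X_[U_(i) *+ (D + 2)] : {mpoly F[n]}) \is (D + 2).-homog.
  by rewrite dhomogX /= mdegMn mdeg1 mul1n.
have /in_monomial_idealP X_std := hD _ (leq_addr _ _) _ homX.
have [/X_std | /forallPn [j /negPn le_gX]] := boolP (standard g (U_(i) *+ (D + 2))%MM).
  by rewrite mcoeffX eqxx => /eqP; rewrite oner_eq0.
by exists j; apply: lep_mulm1_mdeg2 le_gX _.
Qed.

Lemma quadratic_standard : minimal_gens G -> artinian (in_ideal G) ->
  exists a b, a != b /\ forall m, standard g m =
    [forall i, ~~ (U_(i) *+ 2 <= m)%MM] && ~~ (U_(a) + U_(b) <= m)%MM.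
Proof.
move=> /minimal_gens_inj g_inj /artinian_square sq.
pose sigma i := odflt ord0 [pick j | g j == (U_(i) *+ 2)%MM].
have sigmaE i : g (sigma i) = (U_(i) *+ 2)%MM.
  rewrite /sigma; case: pickP => [j /eqP //|none].
  by have [j gj] := sq i; move: (none j); rewrite gj eqxx.
have sigma_inj : injective sigma.
  move=> i k /(congr1 g); rewrite !sigmaE => /mnmP/(_ i).
  by rewrite !mulmnE !mnm1E eqxx; case: eqVneq.
pose img := [set sigma i | i : 'I_n].
have /cards1P [j0 img_c] : #|~: img| == 1%N.
  by have := cardsC img; rewrite card_imset // !card_ord => ?; apply/eqP; lia.
have cover j : j = j0 \/ exists i, j = sigma i.
  have [/imsetP [i _ ->]|] := boolP (j \in img); first by right; exists i.
  by rewrite -in_setC img_c => /set1P; left.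
have j0_img : j0 \notin img by rewrite -in_setC img_c set11.
have not_sq i : g j0 != (U_(i) *+ 2)%MM.
  by rewrite -sigmaE; apply: contraNneq j0_img => /g_inj ->; apply: imset_f.
have [a [b gj0]] := mdeg2P (hdeg j0).
exists a, b; split.
  by apply: contraNneq (not_sq a) => eab; rewrite gj0 -eab mulmS mulm1n.
move=> m; apply/forallP/andP => [std_m | [/forallP sq_m ab_m] j].
  by split; [apply/forallP => i; rewrite -sigmaE | rewrite -gj0].
by have [->|[i ->]] := cover j; rewrite ?gj0 ?sigmaE.
Qed.

Lemma quadratic_in_idealP : minimal_gens G -> artinian (in_ideal G) ->
  exists a b, a != b /\ forall f,
    in_ideal G f <-> (forall U, allowed a b U -> f@_(mset U) = 0).
Proof.
move=> hmin hart; have [a [b [ab stdE]]] := quadratic_standard hmin hart.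
exists a, b; split => // f; rewrite in_monomial_idealP; split => [h U aU | h m].
  apply: h; rewrite stdE lep_addm1_mset //; apply/andP; split => //.
  by apply/forallP => i; rewrite lep_mulm1_mset.
rewrite stdE => /andP [/forallP sq_m]; rewrite (mset_support sq_m) lep_addm1_mset //.
exact: h.
Qed.

End QuadraticGenerators.

Section EllOnAllowedMonomials.
Variables (F : fieldType) (n : nat) (a b : 'I_n) (I : {mpoly F[n]} -> Prop).
Hypothesis F0 : [pchar F] =i pred0.
Hypothesis ab : a != b.
Hypothesis IP : forall f, I f <-> (forall U, allowed a b U -> f@_(mset U) = 0).
Local Notation P := {mpoly F[n]}.
Local Notation fn := {ffun {set 'I_n} -> F^o}.
Local Notation m := #|~: [set a; b]|.

Definition allowed_coefs (f : P) : fn :=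
  [ffun U => if allowed a b U then f@_(mset U) else 0].

Lemma supp_allowed_coefs d f : f \is d.-homog -> supp_allowed a b d (allowed_coefs f).
Proof.
move=> hf T; rewrite ffunE; case: ifP => [_ fT|_]; last by rewrite eqxx.
by apply: contraR fT; rewrite -mdeg_mset => /(dhomog_nemf_coeff hf) ->.
Qed.

Lemma raise_allowed_coefs f U : allowed a b U ->
  raise setT (allowed_coefs f) U = (ell F n * f)@_(mset U).
Proof.
move=> aU; rewrite raise_setTE mcoeff_ellM; apply: eq_bigr => i _; rewrite ffunE.
by move: aU; rewrite /allowed !inE; case: (a \in U); case: (b \in U); rewrite ?andbF.
Qed.

Lemma ell_mult_injective d : (2 * d <= m)%N -> (2 <= m)%N -> mult_injective I (ell F n) d.
Proof.
move=> le_dm m_ge2 f hf /IP ellf_I; apply/IP => U aU.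
have /ffunP/(_ U) := raise_allowed_inj F0 ab le_dm m_ge2 (supp_allowed_coefs hf)
  (fun U aU => etrans (raise_allowed_coefs f aU) (ellf_I U aU)).
by rewrite !ffunE aU.
Qed.

Lemma mcoeff_sum_mset (c : fn) V : (\sum_U c U *: 'X_[mset U] : P)@_(mset V) = c V.
Proof.
rewrite raddf_sum (bigD1 V) //= mcoeffZ mcoeffX eqxx mulr1 big1 ?addr0 //.
by move=> W /negbTE WV; rewrite mcoeffZ mcoeffX (inj_eq (@mset_inj n)) WV mulr0.
Qed.

Lemma ell_mult_surjective d : (m < 2 * d)%N -> (0 < m)%N -> mult_surjective I (ell F n) d.
Proof.
move=> lt_md m_gt0 h hh.
have [c hc raise_c] := raise_allowed_surj F0 ab lt_md m_gt0 (supp_allowed_coefs hh).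
exists (\sum_U c U *: 'X_[mset U]); split.
  apply: rpred_sum => U _; have [-> | /hc /andP [_ /eqP <-]] := eqVneq (c U) 0.
    by rewrite scale0r rpred0.
  by rewrite dhomogZ // dhomogX /= mdeg_mset.
have coefs_c : allowed_coefs (\sum_U c U *: 'X_[mset U]) = c.
  apply/ffunP => U; rewrite ffunE mcoeff_sum_mset; case: ifP => // nU.
  by apply/esym/eqP; apply: contraFT nU => /hc /andP [].
apply/IP => U aU; rewrite mcoeffB -raise_allowed_coefs // coefs_c raise_c //.
by rewrite ffunE aU subrr.
Qed.

End EllOnAllowedMonomials.

Lemma card_setC2 n (a b : 'I_n) : a != b -> #|~: [set a; b]| = (n - 2)%N.
Proof. by move=> ab; have := cardsC [set a; b]; rewrite cards2 ab card_ord; lia. Qed.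

Theorem lemma6p3 (F : fieldType) (n : nat) (g : 'I_n.+1 -> 'X_{1..n}) :
  [pchar F] =i pred0 ->
  (4 <= n)%N ->
  (forall j, mdeg (g j) = 2%N) ->
  minimal_gens (fun j => 'X_[g j] : {mpoly F[n]}) ->
  artinian (in_ideal (fun j => 'X_[g j] : {mpoly F[n]})) ->
  WLP (in_ideal (fun j => 'X_[g j] : {mpoly F[n]})).
Proof.
move=> F0 n_ge4 hdeg hmin hart.
have [a [b [ab IP]]] := quadratic_in_idealP hdeg hmin hart.
have m_eq := card_setC2 ab.
exists (ell F n); split => [|d]; first exact: ell_homog.
have [le_dm | lt_md] := leqP (2 * d) (n - 2).
  by left; apply: (ell_mult_injective F0 ab IP); rewrite m_eq; lia.
by right; apply: (ell_mult_surjective F0 ab IP); rewrite m_eq; lia.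
Qed.
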